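(* Let $d\ge1$, $D=2^d$, $b$ an odd integer and $w=(b-1)/2$. Identify $a\in\{0,\dots,D-1\}$ with its bit string $(a_{d-1},\dots,a_0)$, $a=\sum_{i=0}^{d-1}a_i2^i$. For $l=1,\dots,d-1$ define the map $G_l$ on $\{0,\dots,D-1\}$ as follows: if bit $a_{d-1-l}$ of its argument $a$ equals $1$, replace the integer $t=\sum_{i=0}^{l-1}a_{d-l+i}2^i$ formed by the top $l$ bits $(a_{d-1},\dots,a_{d-l})$ by $t+w\bmod 2^l$, leaving all other bits unchanged; if $a_{d-1-l}=0$, $G_l(a)=a$. Then for every $a\in\{0,\dots,D-1\}$, $$G_{d-1}\circ G_{d-2}\circ\cdots\circ G_1(a)=ab\bmod D .$$ Consequently the modular multiplication gate $|a\rangle\mapsto|ab\bmod D\rangle$ on $d$ qubits equals the product of the corresponding controlled modular-summation gates $\mathcal{SUM}(w\bmod 2^{d-1})^{h_0}\cdots\mathcal{SUM}(w\bmod 2^{2})^{h_{d-3}}\mathcal{SUM}(w\bmod 2^{1})^{h_{d-2}}$ (rightmost applied first) and requires no auxiliary qubits.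
   Context: $\mathcal{SUM}(w\bmod 2^l)^{h_k}$ denotes the gate that, controlled by qubit $h_k$ (the qubit holding bit $a_k$), adds $w$ modulo $2^l$ to the register formed by the top $l$ qubits $(h_{d-1},\dots,h_{d-l})$, interpreted as an $l$-bit integer with $h_{d-l}$ least significant. *)

From mathcomp Require Import all_boot all_order all_algebra.
Set Implicit Arguments. Unset Strict Implicit. Unset Printing Implicit Defensive.
Import GRing.Theory Num.Theory.

Definition bit (i a : nat) : bool := odd (a %/ 2 ^ i).

(* On d qubits (a < 2^d), the integer formed by the top l bits
   (a_{d-1},...,a_{d-l}) with a_{d-l} least significant. *)
Definition topbits (d l a : nat) : nat := a %/ 2 ^ (d - l).
Definition lowbits (d l a : nat) : nat := a %% 2 ^ (d - l).

(* (t + w) mod 2^l, computed in the integers (w may be negative). *)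
Definition addmod (l t : nat) (w : int) : nat :=
  `| ((t%:Z + w) %% (2 ^ l)%:Z)%Z |%N.

Definition SUMgate (d l k : nat) (w : int) (a : nat) : nat :=
  if bit k a then addmod l (topbits d l a) w * 2 ^ (d - l) + lowbits d l a
  else a.

Definition G (d : nat) (w : int) (l : nat) (a : nat) : nat :=
  SUMgate d l (d - 1 - l) w a.

Definition Gcomp (d : nat) (w : int) (a : nat) : nat :=
  foldl (fun x l => G d w l x) a (iota 1 (d - 1)).

(* Gate G_l adds a_{d-1-l} * w * 2^(d-l) to the register modulo 2^d and never
   touches the low d-l bits, so the control bit it reads is still the original
   bit of a. Summing, G_{d-1} o ... o G_1 adds
   w * \sum_(k < d-1) a_k 2^(k+1) = 2 w (a mod 2^(d-1)), and
   a + 2 w (a mod 2^(d-1)) = a (1 + 2 w) = a b modulo 2^d because the missing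
   term 2 w a_{d-1} 2^(d-1) is a multiple of 2^d. *)

From mathcomp Require Import all_boot all_order all_algebra.
From mathcomp Require Import zify ring.
Import GRing.Theory Num.Theory.

Lemma bit_mod_exp2 (k m x : nat) : (k < m)%N -> bit k (x %% 2 ^ m) = bit k x.
Proof.
move=> km; rewrite /bit {2}(divn_eq x (2 ^ m)).
have -> : (2 ^ m = 2 ^ (m - k) * 2 ^ k)%N by rewrite -expnD subnK // ltnW.
rewrite mulnA divnMDl ?expn_gt0 // oddD oddM oddX /=.
by rewrite subn_eq0 leqNgt km andbF.
Qed.

Lemma modn_exp2S (a m : nat) : (a %% 2 ^ m.+1 = a %% 2 ^ m + bit m a * 2 ^ m)%N.
Proof.
rewrite /bit; set q := a %/ 2 ^ m.
have ea : a = (q %/ 2) * 2 ^ m.+1 + (odd q * 2 ^ m + a %% 2 ^ m).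
  rewrite {1}(divn_eq a (2 ^ m)) -/q {1}(divn_eq q 2) modn2 expnSr.
  by rewrite mulnDl addnA [2 ^ m * 2]mulnC mulnA.
rewrite {1}ea modnMDl modn_small addnC //.
have := ltn_mod a (2 ^ m); rewrite expn_gt0 expnSr /=.
by case: (odd q) => /=; lia.
Qed.

Local Open Scope ring_scope.

Lemma oddz_half (b : int) : (b %% 2)%Z = 1 -> b = 1 + 2 * ((b - 1) %/ 2)%Z.
Proof.
move=> b_odd; have eb := divz_eq b 2; rewrite b_odd in eb.
have -> : b - 1 = (b %/ 2)%Z * 2 by rewrite {1}eb; ring.
by rewrite mulzK // {1}eb; ring.
Qed.

Lemma addmod_mulD (l m t lo : nat) (w : int) : (lo < 2 ^ m)%N ->
  ((addmod l t w * 2 ^ m + lo)%N)%:Z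
    = (((t * 2 ^ m + lo)%N%:Z + w * (2 ^ m)%N%:Z) %% (2 ^ (l + m))%N%:Z)%Z.
Proof.
move=> lo_lt.
have Pm : (0 < 2 ^ m)%N by rewrite expn_gt0.
have Pl : (0 < 2 ^ l)%N by rewrite expn_gt0.
set s : int := ((t%:Z + w) %% (2 ^ l)%N%:Z)%Z.
have s_ge0 : 0 <= s by apply: modz_ge0; lia.
have s_lt : s < (2 ^ l)%N%:Z by apply: ltz_pmod; lia.
have -> : ((addmod l t w * 2 ^ m + lo)%N)%:Z = s * (2 ^ m)%N%:Z + lo%:Z.
  by rewrite PoszD PoszM /addmod gez0_abs.
have eq_sum : (t * 2 ^ m + lo)%N%:Z + w * (2 ^ m)%N%:Z
    = ((t%:Z + w) %/ (2 ^ l)%N%:Z)%Z * (2 ^ (l + m))%N%:Z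
      + (s * (2 ^ m)%N%:Z + lo%:Z).
  have eq_tw := divz_eq (t%:Z + w) (2 ^ l)%N%:Z; rewrite -/s in eq_tw.
  rewrite expnD PoszM PoszD PoszM; lia.
rewrite eq_sum modzMDl modz_small //; rewrite expnD PoszM; apply/andP; nia.
Qed.

Section SUMgate.

Variables (d l k : nat) (w : int).
Hypothesis l_le_d : (l <= d)%N.

Lemma SUMgate_modn (x : nat) :
  (SUMgate d l k w x %% 2 ^ (d - l) = x %% 2 ^ (d - l))%N.
Proof.
by rewrite /SUMgate; case: bit => //; rewrite modnMDl /lowbits modn_mod.
Qed.

Lemma SUMgateE (x : nat) : (x < 2 ^ d)%N ->
  (SUMgate d l k w x)%:Z
    = ((x%:Z + (bit k x)%:Z * w * (2 ^ (d - l))%N%:Z) %% (2 ^ d)%N%:Z)%Z.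
Proof.
move=> x_lt; rewrite /SUMgate; case: bit => /=; last first.
  by rewrite !mul0r addr0 modz_small // ltz_nat x_lt andbT.
rewrite mul1r addmod_mulD ?subnKC // /lowbits ?ltn_mod ?expn_gt0 //.
by rewrite /topbits -divn_eq.
Qed.

Lemma SUMgate_lt (x : nat) : (x < 2 ^ d)%N -> (SUMgate d l k w x < 2 ^ d)%N.
Proof.
by move=> x_lt; rewrite -ltz_nat SUMgateE // ltz_pmod // ltz_nat expn_gt0.
Qed.

End SUMgate.

Definition Gprefix (d : nat) (w : int) (n a : nat) : nat :=
  foldl (fun x l => G d w l x) a (iota 1 n).

Lemma GprefixS (d : nat) (w : int) (n a : nat) :
  Gprefix d w n.+1 a = G d w n.+1 (Gprefix d w n a).
Proof.
by rewrite /Gprefix -(addn1 n) iotaD foldl_cat add1n addn1.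
Qed.

Section Gprefix.

Variables (d : nat) (w : int) (a : nat).
Hypotheses (d_ge1 : (1 <= d)%N) (a_lt : (a < 2 ^ d)%N).

Lemma Gprefix_lt_modn (n : nat) : (n <= d - 1)%N ->
  (Gprefix d w n a < 2 ^ d)%N
  /\ (Gprefix d w n a %% 2 ^ (d - n) = a %% 2 ^ (d - n))%N.
Proof.
elim: n => [|n IHn] n_le //; rewrite GprefixS.
have [lt_n mod_n] := IHn (ltnW n_le).
have le_d : (n.+1 <= d)%N by lia.
split; first exact: SUMgate_lt.
have dvd_n : (2 ^ (d - n.+1) %| 2 ^ (d - n))%N by rewrite dvdn_exp2l //; lia.
by rewrite /G SUMgate_modn // -(modn_dvdm _ dvd_n) mod_n modn_dvdm.
Qed.

Lemma Gprefix_bit (n : nat) : (n < d - 1)%N ->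
  bit (d - 1 - n.+1) (Gprefix d w n a) = bit (d - 1 - n.+1) a.
Proof.
move=> n_lt; have [_ mod_n] := Gprefix_lt_modn _ (ltnW n_lt).
have lt_dn : (d - 1 - n.+1 < d - n)%N by lia.
by rewrite -(bit_mod_exp2 _ _ (Gprefix d w n a) lt_dn) mod_n bit_mod_exp2.
Qed.

Lemma GprefixE (n : nat) : (n <= d - 1)%N ->
  (Gprefix d w n a)%:Z
    = ((a%:Z + 2 * w * ((a %% 2 ^ (d - 1))%N%:Z - (a %% 2 ^ (d - 1 - n))%N%:Z))
       %% (2 ^ d)%N%:Z)%Z.
Proof.
elim: n => [|n IHn] n_le.
  by rewrite subn0 subrr mulr0 addr0 modz_small // ltz_nat a_lt.
have [lt_n _] := Gprefix_lt_modn _ (ltnW n_le).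
rewrite GprefixS /G SUMgateE //; last by lia.
rewrite Gprefix_bit // IHn ?(ltnW n_le) // modzDml.
have -> : (d - n.+1 = (d - 1 - n.+1).+1)%N by lia.
have -> : (d - 1 - n = (d - 1 - n.+1).+1)%N by lia.
rewrite modn_exp2S PoszD !PoszM expnS PoszM.
congr (_ %% _)%Z; ring.
Qed.

End Gprefix.

Lemma mulz_modn_exp2 (d a : nat) (w : int) : (1 <= d)%N ->
  ((a%:Z + 2 * w * (a %% 2 ^ (d - 1))%N%:Z) %% (2 ^ d)%N%:Z)%Z
    = ((a%:Z * (1 + 2 * w)) %% (2 ^ d)%N%:Z)%Z.
Proof.
move=> d_ge1.
have e2d : (2 ^ d = 2 ^ (d - 1) * 2)%N by rewrite -expnSr subn1 prednK.
have -> : a%:Z * (1 + 2 * w)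
    = w * (a %/ 2 ^ (d - 1))%N%:Z * (2 ^ d)%N%:Z
      + (a%:Z + 2 * w * (a %% 2 ^ (d - 1))%N%:Z).
  have ea : a%:Z = (a %/ 2 ^ (d - 1))%N%:Z * (2 ^ (d - 1))%N%:Z
                   + (a %% 2 ^ (d - 1))%N%:Z.
    by rewrite -PoszM -PoszD -divn_eq.
  by rewrite e2d PoszM ea; ring.
by rewrite modzMDl.
Qed.

Theorem mainTheorem8 (d : nat) (b : int) :
  (1 <= d)%N -> (b %% 2)%Z = 1 ->
  let w : int := ((b - 1) %/ 2)%Z in
  forall a : nat, (a < 2 ^ d)%N ->
    (Gcomp d w a)%:Z = ((a%:Z * b) %% (2 ^ d)%:Z)%Z.
Proof.
move=> d_ge1 b_odd w a a_lt.
rewrite (oddz_half b b_odd) -/w -mulz_modn_exp2 //.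
rewrite [Gcomp _ _ _](_ : _ = Gprefix d w (d - 1) a) // GprefixE //.
by rewrite subnn expn0 modn1 subr0.
Qed.
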